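(* Let $l,d,t>0$ and $R_{t,d,l}(z)=t+(2l+2d-t)z+(2l-2d-t)z^2+tz^3$. (1) $R_{t,d,l}$ has two (non-real) complex conjugate roots if and only if $l\,q_1(t,l)<d<l\,q_2(t,l)$. (2) If $z_0$ denotes a non-real root of $R_{t,d,l}$ in the upper half plane (when it exists), then $|z_0|>1$. (3) If $d\ge l\,q_2(t,l)$ and $z_{\max}$ denotes the largest real root of $R_{t,d,l}$, then $z_{\max}>1$. (4) If $d\le l\,q_1(t,l)$ and $z_{\min}$ denotes the smallest real root of $R_{t,d,l}$, then $z_{\min}<-1$.
   Context: $q_2(t,l)=\sqrt{-\frac{t^2}{2l^2}+\frac{5t}{l}+1+\frac12\frac{t^2}{l^2}\bigl(1+\frac{4l}{t}\bigr)^{3/2}}$, and $q_1(t,l)=\sqrt{-\frac{t^2}{2l^2}+\frac{5t}{l}+1-\frac12\frac{t^2}{l^2}\bigl(1+\frac{4l}{t}\bigr)^{3/2}}$ if $0\le t/l<\frac12$, while $q_1(t,l)=0$ if $t/l\ge\frac12$. *)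

From Stdlib Require Import Reals Lra.
From Coquelicot Require Import Coquelicot.
Open Scope R_scope.

Definition q2 (t l : R) : R :=
  sqrt (- t^2 / (2 * l^2) + 5 * t / l + 1
        + / 2 * (t^2 / l^2) * Rpower (1 + 4 * l / t) (3 / 2)).

Definition q1 (t l : R) : R :=
  if Rlt_dec (t / l) (1 / 2) then
    sqrt (- t^2 / (2 * l^2) + 5 * t / l + 1
          - / 2 * (t^2 / l^2) * Rpower (1 + 4 * l / t) (3 / 2))
  else 0.

Definition Rtdl (t d l z : R) : R :=
  t + (2*l + 2*d - t) * z + (2*l - 2*d - t) * z^2 + t * z^3.

Definition RtdlC (t d l : R) (z : C) : C :=
  (RtoC t + RtoC (2*l + 2*d - t) * z + RtoC (2*l - 2*d - t) * (z * z)
   + RtoC t * (z * z * z))%C.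

From Stdlib Require Import Reals Lra Psatz.
From Coquelicot Require Import Coquelicot.
Open Scope R_scope.

(* The outer coefficients of R_{t,d,l} agree, so its roots have product -1,
   and R(-1) = -4d < 0 < t = R(0) gives a real root r in (-1, 0).  The
   quadratic cofactor of z - r has roots with product -1/r > 1: a non-real
   pair has squared modulus -1/r, and a real pair lies on the side of 0 given
   by the sign of its sum -(b + t r)/t, where b = 2l - 2d - t.  The cofactor
   has non-real roots iff the cubic discriminant is negative, and this
   discriminant is 16 (d^2 - (l q_2)^2) (d^2 - (l q_1)^2) whenever q_1 > 0, so
   (1) follows; (3) and (4) only need l < l q_2 and l q_1 <= l - t. *)

Definition quad (p q s z : R) : R := p * z^2 + q * z + s.

Definition quadC (p q s : R) (z : C) : C :=
  (RtoC p * (z * z) + RtoC q * z + RtoC s)%C.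

Definition quad_disc (p q s : R) : R := q^2 - 4 * p * s.

Lemma quadC_pair p q s x y :
  quadC p q s (x, y) = (p * (x^2 - y^2) + q * x + s, (2 * p * x + q) * y).
Proof. unfold quadC, RtoC, Cplus, Cmult; simpl; f_equal; ring. Qed.

Lemma quadC_nonreal_root p q s z :
  p <> 0 -> Im z <> 0 -> quadC p q s z = RtoC 0 ->
  quad_disc p q s < 0 /\ p * Cmod z ^ 2 = s.
Proof.
  intros hp hy hz; rewrite Cmod2_alt.
  destruct z as [x y]; cbn [Re Im fst snd] in *.
  rewrite quadC_pair in hz; injection hz as hre him.
  assert (hq : q = - (2 * p * x)).
  { apply Rmult_integral in him as [h | h]; [lra | contradiction]. }
  unfold quad_disc; subst q.
  split; [| lra].
  assert (0 < p^2 * y^2) by (apply Rmult_lt_0_compat; apply pow2_gt_0; auto).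
  nra.
Qed.

Lemma quadC_nonreal_root_exists p q s :
  p <> 0 -> quad_disc p q s < 0 -> exists z, Im z <> 0 /\ quadC p q s z = RtoC 0.
Proof.
  unfold quad_disc; intros hp hdisc.
  assert (hsq : 0 < sqrt (- (q^2 - 4 * p * s))) by (apply sqrt_lt_R0; lra).
  pose proof (sqrt_sqrt (- (q^2 - 4 * p * s)) ltac:(lra)) as hsqr.
  exists (- q / (2 * p), sqrt (- (q^2 - 4 * p * s)) / (2 * p)); cbn [Im snd]; split.
  - unfold Rdiv; apply Rmult_integral_contrapositive_currified.
    + lra.
    + apply Rinv_neq_0_compat; lra.
  - rewrite quadC_pair; unfold RtoC; f_equal.
    + replace ((sqrt (- (q^2 - 4 * p * s)) / (2 * p))^2)
        with (sqrt (- (q^2 - 4 * p * s)) * sqrt (- (q^2 - 4 * p * s)) / (4 * p^2))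
        by (field; auto).
      rewrite hsqr; field; auto.
    + field; auto.
Qed.

Lemma quad_pos_of_disc_neg p q s z : 0 < p -> quad_disc p q s < 0 -> 0 < quad p q s z.
Proof.
  unfold quad, quad_disc; intros hp hdisc.
  assert (4 * p * (p * z^2 + q * z + s) = (2 * p * z + q)^2 - (q^2 - 4 * p * s)) by ring.
  pose proof (pow2_ge_0 (2 * p * z + q)); nra.
Qed.

Lemma quad_real_roots p q s : 0 < p -> 0 <= quad_disc p q s ->
  exists v w, v <= w /\ quad p q s v = 0 /\ quad p q s w = 0
              /\ v + w = - q / p /\ v * w = s / p.
Proof.
  unfold quad, quad_disc; intros hp hdisc.
  set (e := sqrt (q^2 - 4 * p * s)).
  assert (he : e * e = q^2 - 4 * p * s) by apply sqrt_sqrt, hdisc.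
  assert (0 <= e) by apply sqrt_pos.
  exists ((- q - e) / (2 * p)), ((- q + e) / (2 * p)); repeat split.
  - apply Rmult_le_compat_r; [apply Rlt_le, Rinv_0_lt_compat |]; lra.
  - apply (Rmult_eq_reg_l (4 * p)); [| lra].
    replace (4 * p * (p * ((- q - e) / (2 * p))^2 + q * ((- q - e) / (2 * p)) + s))
      with (e * e - (q^2 - 4 * p * s)) by (field; lra).
    rewrite he; ring.
  - apply (Rmult_eq_reg_l (4 * p)); [| lra].
    replace (4 * p * (p * ((- q + e) / (2 * p))^2 + q * ((- q + e) / (2 * p)) + s))
      with (e * e - (q^2 - 4 * p * s)) by (field; lra).
    rewrite he; ring.
  - field; lra.
  - apply (Rmult_eq_reg_l (4 * p^2)); [| nra].
    replace (4 * p^2 * ((- q - e) / (2 * p) * ((- q + e) / (2 * p)))) with (q^2 - e * e)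
      by (field; lra).
    rewrite he; field; lra.
Qed.

Definition cubic (t a b z : R) : R := t + a * z + b * z^2 + t * z^3.

Definition cubicC (t a b : R) (z : C) : C :=
  (RtoC t + RtoC a * z + RtoC b * (z * z) + RtoC t * (z * z * z))%C.

Definition cubic_disc (t a b : R) : R :=
  18 * t^2 * a * b - 4 * b^3 * t + a^2 * b^2 - 4 * t * a^3 - 27 * t^4.

Section CubicFactor.

Variables t a b r : R.
Hypothesis root_r : cubic t a b r = 0.

Let c1 := b + t * r.
Let c0 := a + b * r + t * r^2.

Lemma cubic_factor z : cubic t a b z = (z - r) * quad t c1 c0 z.
Proof. unfold cubic, quad, c1, c0 in *; lra. Qed.

Lemma cubicC_factor z : cubicC t a b z = ((z - RtoC r) * quadC t c1 c0 z)%C.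
Proof.
  destruct z as [x y]; unfold cubic, cubicC, quadC, c1, c0, RtoC, Cplus, Cminus, Copp, Cmult in *.
  simpl; f_equal; lra.
Qed.

Lemma cubic_disc_factor : r <> 0 ->
  cubic_disc t a b = quad_disc t c1 c0 * (quad t c1 c0 r)^2.
Proof.
  intro hr; unfold cubic in root_r; unfold cubic_disc, quad_disc, quad, c1, c0.
  replace a with (- (t + b * r^2 + t * r^3) / r) by (field_simplify_eq; lra).
  field; auto.
Qed.

Lemma cubic_root_mul_cofactor_const : r * c0 = - t.
Proof. unfold cubic, c0 in *; lra. Qed.

End CubicFactor.

Section ReciprocalCubic.

Variables t a b r : R.
Hypothesis t_pos : 0 < t.
Hypothesis r_bounds : -1 < r < 0.
Hypothesis root_r : cubic t a b r = 0.

Let c1 := b + t * r.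
Let c0 := a + b * r + t * r^2.

Lemma cubicC_nonreal_root_cofactor z :
  Im z <> 0 -> cubicC t a b z = RtoC 0 -> quadC t c1 c0 z = RtoC 0.
Proof.
  intros hz hroot; rewrite (cubicC_factor _ _ _ _ root_r) in hroot.
  destruct (Ceq_dec (quadC t c1 c0 z) 0) as [| hq]; [assumption | exfalso].
  apply (Cmult_neq_0 (z - RtoC r)) in hq; [contradiction |].
  intro e; apply hz; destruct z as [x y].
  unfold Cminus, Cplus, Copp, RtoC in e; injection e as _ e; simpl; lra.
Qed.

Lemma cubic_disc_neg_iff : cubic_disc t a b < 0 <-> quad_disc t c1 c0 < 0.
Proof.
  rewrite (cubic_disc_factor _ _ _ _ root_r) by lra; fold c1 c0.
  pose proof (pow2_ge_0 (quad t c1 c0 r)); split; intro h.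
  - destruct (Rlt_le_dec (quad_disc t c1 c0) 0); [assumption | nra].
  - pose proof (quad_pos_of_disc_neg t c1 c0 r t_pos h).
    assert (0 < quad t c1 c0 r ^ 2) by (apply pow_lt; lra); nra.
Qed.

Lemma cubicC_nonreal_root_iff :
  (exists z, Im z <> 0 /\ cubicC t a b z = RtoC 0) <-> cubic_disc t a b < 0.
Proof.
  rewrite cubic_disc_neg_iff; split.
  - intros [z [hz hroot]].
    exact (proj1 (quadC_nonreal_root t c1 c0 z ltac:(lra) hz
                    (cubicC_nonreal_root_cofactor z hz hroot))).
  - intro h; destruct (quadC_nonreal_root_exists t c1 c0) as [z [hz hq]]; [lra | assumption |].
    exists z; split; [assumption |].
    rewrite (cubicC_factor _ _ _ _ root_r); fold c1 c0; rewrite hq; ring.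
Qed.

Lemma cubicC_nonreal_root_Cmod z : Im z <> 0 -> cubicC t a b z = RtoC 0 -> 1 < Cmod z.
Proof.
  intros hz hroot.
  destruct (quadC_nonreal_root t c1 c0 z ltac:(lra) hz
              (cubicC_nonreal_root_cofactor z hz hroot)) as [_ hmod].
  pose proof (cubic_root_mul_cofactor_const _ _ _ _ root_r) as hrc; fold c0 in hrc.
  assert (r * Cmod z ^ 2 = -1).
  { apply (Rmult_eq_reg_l t); [| lra].
    replace (t * (r * Cmod z ^ 2)) with (r * (t * Cmod z ^ 2)) by ring.
    rewrite hmod, hrc; ring. }
  assert (hm : 0 < Cmod z ^ 2) by nra.
  assert (1 < Cmod z ^ 2) by nra.
  pose proof (Cmod_ge_0 z); nra.
Qed.

Lemma cubic_real_cofactor_roots : 0 <= cubic_disc t a b ->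
  exists v w, v <= w /\ cubic t a b v = 0 /\ cubic t a b w = 0
              /\ t * (v + w) = - c1 /\ r * (v * w) = -1.
Proof.
  intro hdisc.
  assert (hq : 0 <= quad_disc t c1 c0).
  { destruct (Rlt_le_dec (quad_disc t c1 c0) 0) as [h |]; [| assumption].
    apply cubic_disc_neg_iff in h; lra. }
  destruct (quad_real_roots t c1 c0 t_pos hq) as (v & w & hvw & hv & hw & hsum & hprod).
  pose proof (cubic_root_mul_cofactor_const _ _ _ _ root_r) as hrc; fold c0 in hrc.
  exists v, w; repeat split; [assumption | | | |].
  - rewrite (cubic_factor _ _ _ _ root_r); fold c1 c0; rewrite hv; ring.
  - rewrite (cubic_factor _ _ _ _ root_r); fold c1 c0; rewrite hw; ring.
  - rewrite hsum; field; lra.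
  - rewrite hprod; replace (r * (c0 / t)) with (r * c0 / t) by (field; lra).
    rewrite hrc; field; lra.
Qed.

Lemma cubic_root_gt_1 : 0 <= cubic_disc t a b -> b <= 0 -> exists w, cubic t a b w = 0 /\ 1 < w.
Proof.
  intros hdisc hb.
  destruct (cubic_real_cofactor_roots hdisc) as (v & w & hvw & _ & hw & hsum & hprod).
  exists w; split; [assumption |].
  assert (0 < v + w) by (unfold c1 in hsum; nra).
  assert (1 < v * w) by nra.
  nra.
Qed.

Lemma cubic_root_lt_m1 : 0 <= cubic_disc t a b -> t <= b -> exists v, cubic t a b v = 0 /\ v < -1.
Proof.
  intros hdisc hb.
  destruct (cubic_real_cofactor_roots hdisc) as (v & w & hvw & hv & _ & hsum & hprod).
  exists v; split; [assumption |].
  assert (v + w < 0) by (unfold c1 in hsum; nra).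
  assert (1 < v * w) by nra.
  nra.
Qed.

End ReciprocalCubic.

Lemma cubic_root_in_m1_0 t a b : 0 < t -> b < a -> exists r, -1 < r < 0 /\ cubic t a b r = 0.
Proof.
  intros ht hab.
  destruct (IVT (cubic t a b) (-1) 0) as (r & [hr1 hr2] & hroot).
  - intro x; unfold cubic; reg.
  - lra.
  - unfold cubic; lra.
  - unfold cubic; lra.
  - exists r; split; [| assumption].
    split.
    + destruct (Req_dec r (-1)) as [-> |]; [unfold cubic in hroot; lra | lra].
    + destruct (Req_dec r 0) as [-> |]; [unfold cubic in hroot; lra | lra].
Qed.

Lemma Rpower_3_2 x : 0 < x -> Rpower x (3 / 2) = x * sqrt x.
Proof.
  intro hx; replace (3 / 2) with (1 + / 2) by field.
  now rewrite Rpower_plus, Rpower_1, Rpower_sqrt.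
Qed.

Lemma pow2_mul_sqrt_div l X : 0 < l -> 0 <= X -> (l * sqrt (X / l^2))^2 = X.
Proof.
  intros hl hX.
  assert (0 <= X / l^2) by (apply Rdiv_le_0_compat; [| apply pow2_gt_0]; lra).
  rewrite Rpow_mult_distr, pow2_sqrt by assumption; field; lra.
Qed.

Lemma mul_neg_between m p x : m < p -> (x - p) * (x - m) < 0 <-> m < x < p.
Proof.
  intro hmp; split.
  - intro h; destruct (Rlt_le_dec x p); [split; [nra | assumption] | nra].
  - intros [hm hp]; apply Rmult_neg_pos; lra.
Qed.

(* (l q_2)^2 = q_center + q_radius and, when positive, (l q_1)^2 = q_center - q_radius. *)
Definition q_center (t l : R) : R := l^2 + 5 * t * l - t^2 / 2.

Definition q_radius (t l : R) : R := t * (t + 4 * l) / 2 * sqrt (1 + 4 * l / t).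

Section PaperThresholds.

Variables t l : R.
Hypothesis t_pos : 0 < t.
Hypothesis l_pos : 0 < l.

Let ratio_pos : 0 < 1 + 4 * l / t.
Proof. assert (0 < 4 * l / t) by (apply Rdiv_lt_0_compat; lra); lra. Qed.

Lemma q_radius_ge : t * (t + 4 * l) / 2 <= q_radius t l.
Proof.
  unfold q_radius; rewrite <- (Rmult_1_r (t * (t + 4 * l) / 2)) at 1.
  apply Rmult_le_compat_l; [nra |].
  rewrite <- sqrt_1 at 1; apply sqrt_le_1_alt.
  assert (0 < 4 * l / t) by (apply Rdiv_lt_0_compat; lra); lra.
Qed.

Lemma q_radius_sqr : q_radius t l ^ 2 = t * (t + 4 * l)^3 / 4.
Proof.
  unfold q_radius; rewrite Rpow_mult_distr, pow2_sqrt by lra; field; lra.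
Qed.

Lemma q_center_sqr_sub : q_center t l ^ 2 - q_radius t l ^ 2 = l * (l - 2 * t)^3.
Proof. rewrite q_radius_sqr; unfold q_center; field. Qed.

Lemma l_sqr_lt_q_center_add : l^2 < q_center t l + q_radius t l.
Proof. pose proof q_radius_ge; unfold q_center; nra. Qed.

Lemma q_radius_div_sqr_l :
  / 2 * (t^2 / l^2) * Rpower (1 + 4 * l / t) (3 / 2) = q_radius t l / l^2.
Proof.
  rewrite Rpower_3_2 by exact ratio_pos; unfold q_radius; field; lra.
Qed.

Lemma sqr_l_q2 : (l * q2 t l)^2 = q_center t l + q_radius t l.
Proof.
  unfold q2; rewrite q_radius_div_sqr_l.
  replace (- t^2 / (2 * l^2) + 5 * t / l + 1 + q_radius t l / l^2)
    with ((q_center t l + q_radius t l) / l^2) by (unfold q_center; field; lra).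
  apply pow2_mul_sqrt_div; [assumption |].
  pose proof l_sqr_lt_q_center_add; nra.
Qed.

Lemma sqr_l_q1 : (l * q1 t l)^2 = Rmax 0 (q_center t l - q_radius t l).
Proof.
  pose proof l_sqr_lt_q_center_add as hadd; pose proof q_center_sqr_sub as hsub.
  unfold q1; destruct (Rlt_dec (t / l) (1 / 2)) as [h | h].
  - assert (2 * t < l) by (apply (Rmult_lt_compat_r l) in h; [| lra];
                           unfold Rdiv in h; rewrite Rmult_assoc, Rinv_l in h; lra).
    assert (0 < (l - 2 * t)^3) by (apply pow_lt; lra).
    assert (hpos : 0 < q_center t l - q_radius t l) by nra.
    rewrite q_radius_div_sqr_l, Rmax_right by lra.
    replace (- t^2 / (2 * l^2) + 5 * t / l + 1 - q_radius t l / l^2)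
      with ((q_center t l - q_radius t l) / l^2) by (unfold q_center; field; lra).
    apply pow2_mul_sqrt_div; lra.
  - assert (l <= 2 * t).
    { apply Rnot_lt_le; intro hl2; apply h.
      apply (Rmult_lt_reg_r l); [lra |]; unfold Rdiv; rewrite Rmult_assoc, Rinv_l; lra. }
    assert ((l - 2 * t)^3 <= 0) by (pose proof (pow2_ge_0 (l - 2 * t)); simpl in *; nra).
    rewrite Rmax_left by nra; ring.
Qed.

Lemma q_center_sub_radius_le : 2 * t < l -> q_center t l - q_radius t l <= (l - t)^2.
Proof.
  intro hl2.
  assert (hcubic : t^2 * (14 * l - 3 * t)^2 / 4 <= q_radius t l ^ 2).
  { rewrite q_radius_sqr.
    replace (t * (t + 4 * l)^3 / 4 - t^2 * (14 * l - 3 * t)^2 / 4)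
      with (t / 4 * (104 * t^3 + 272 * t^2 * (l - 2 * t) + 236 * t * (l - 2 * t)^2
                     + 64 * (l - 2 * t)^3)) by field.
    assert (0 < (l - 2 * t)^3) by (apply pow_lt; lra).
    assert (0 < t^2 * (l - 2 * t)) by (apply Rmult_lt_0_compat; [apply pow2_gt_0 |]; lra).
    assert (0 < t * (l - 2 * t)^2) by (apply Rmult_lt_0_compat; [| apply pow2_gt_0]; lra).
    assert (0 < t^3) by (apply pow_lt; lra).
    nra. }
  assert (0 <= q_radius t l) by (pose proof q_radius_ge; nra).
  assert (t * (14 * l - 3 * t) / 2 <= q_radius t l) by nra.
  unfold q_center; nra.
Qed.

Lemma l_q2_nonneg : 0 <= l * q2 t l.
Proof. apply Rmult_le_pos; [lra | apply sqrt_pos]. Qed.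

Lemma l_q1_nonneg : 0 <= l * q1 t l.
Proof.
  unfold q1; destruct (Rlt_dec (t / l) (1 / 2)).
  - apply Rmult_le_pos; [lra | apply sqrt_pos].
  - lra.
Qed.

Lemma l_lt_l_q2 : l < l * q2 t l.
Proof.
  pose proof sqr_l_q2; pose proof l_sqr_lt_q_center_add; pose proof l_q2_nonneg.
  nra.
Qed.

Lemma l_q1_le : 0 < l * q1 t l -> l * q1 t l <= l - t.
Proof.
  intro hpos.
  pose proof sqr_l_q1 as hq1.
  assert (hM : 0 < q_center t l - q_radius t l).
  { destruct (Rle_dec (q_center t l - q_radius t l) 0).
    - rewrite Rmax_left in hq1 by assumption; nra.
    - lra. }
  rewrite Rmax_right in hq1 by lra.
  assert (2 * t < l).
  { pose proof q_center_sqr_sub; pose proof l_sqr_lt_q_center_add.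
    destruct (Rlt_le_dec (2 * t) l) as [| hle]; [assumption | exfalso].
    assert ((l - 2 * t)^3 <= 0) by (pose proof (pow2_ge_0 (l - 2 * t)); simpl in *; nra).
    nra. }
  pose proof q_center_sub_radius_le; nra.
Qed.

Lemma cubic_disc_Rtdl d : cubic_disc t (2 * l + 2 * d - t) (2 * l - 2 * d - t)
  = 16 * ((d^2 - (q_center t l + q_radius t l)) * (d^2 - (q_center t l - q_radius t l))).
Proof.
  replace (16 * ((d^2 - (q_center t l + q_radius t l)) * (d^2 - (q_center t l - q_radius t l))))
    with (16 * ((d^2 - q_center t l)^2 - q_radius t l ^ 2)) by ring.
  rewrite q_radius_sqr; unfold cubic_disc, q_center; field.
Qed.

Lemma Rtdl_disc_neg_iff d : 0 < d ->
  cubic_disc t (2 * l + 2 * d - t) (2 * l - 2 * d - t) < 0 <-> l * q1 t l < d < l * q2 t l.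
Proof.
  intro hd.
  assert (hr : 0 < q_radius t l) by (pose proof q_radius_ge; nra).
  pose proof sqr_l_q1 as hq1; pose proof sqr_l_q2 as hq2.
  pose proof l_q1_nonneg; pose proof l_q2_nonneg.
  rewrite cubic_disc_Rtdl.
  assert (hscale : forall X, 16 * X < 0 <-> X < 0) by (split; intro; lra).
  rewrite hscale, mul_neg_between by lra.
  split; intros [h1 h2]; split.
  - assert ((l * q1 t l)^2 < d^2) by (rewrite hq1; apply Rmax_lub_lt; nra).
    nra.
  - nra.
  - pose proof (Rmax_r 0 (q_center t l - q_radius t l)); nra.
  - nra.
Qed.

End PaperThresholds.

Theorem proposition5p1 (t d l : R) (ht : 0 < t) (hd : 0 < d) (hl : 0 < l) :
  ((exists z : C, Im z <> 0 /\ RtdlC t d l z = RtoC 0)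
     <-> (l * q1 t l < d /\ d < l * q2 t l))
  /\ (forall z0 : C, 0 < Im z0 -> RtdlC t d l z0 = RtoC 0 -> 1 < Cmod z0)
  /\ (l * q2 t l <= d -> forall zmax : R,
        Rtdl t d l zmax = 0 -> (forall z : R, Rtdl t d l z = 0 -> z <= zmax) ->
        1 < zmax)
  /\ (d <= l * q1 t l -> forall zmin : R,
        Rtdl t d l zmin = 0 -> (forall z : R, Rtdl t d l z = 0 -> zmin <= z) ->
        zmin < -1).
Proof.
  change (RtdlC t d l) with (cubicC t (2 * l + 2 * d - t) (2 * l - 2 * d - t)).
  change (Rtdl t d l) with (cubic t (2 * l + 2 * d - t) (2 * l - 2 * d - t)).
  destruct (cubic_root_in_m1_0 t (2 * l + 2 * d - t) (2 * l - 2 * d - t) ht ltac:(lra))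
    as (r & hr & hroot).
  pose proof (Rtdl_disc_neg_iff t l ht hl d hd) as hdisc.
  split; [| split; [| split]].
  - rewrite (cubicC_nonreal_root_iff _ _ _ r ht hr hroot); exact hdisc.
  - intros z hz; apply (cubicC_nonreal_root_Cmod _ _ _ r ht hr hroot); lra.
  - intros hq2 zmax _ hmax.
    pose proof (l_lt_l_q2 t l ht hl).
    destruct (cubic_root_gt_1 _ _ _ r ht hr hroot) as (w & hw & hw1); [| lra |].
    + apply Rnot_lt_le; rewrite hdisc; lra.
    + specialize (hmax w hw); lra.
  - intros hq1 zmin _ hmin.
    pose proof (l_q1_le t l ht hl ltac:(lra)).
    destruct (cubic_root_lt_m1 _ _ _ r ht hr hroot) as (v & hv & hv1); [| lra |].
    + apply Rnot_lt_le; rewrite hdisc; lra.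
    + specialize (hmin v hv); lra.
Qed.
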